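(* There is an absolute constant $C$ such that the following holds. Let $K$ be any field, $n\ge 3$, $V$ an $n$-dimensional $K$-vector space, and let $X$ be a symmetric generating set of $SL(V)$ with $1\in X$ which contains a whole transvection group $t^K$. Let $$Y_1=\{x_{n^2}\cdots x_1\, t^\lambda\, x_1^{-1}\cdots x_{n^2}^{-1}\,:\,\lambda\in K,\ x_1,\ldots,x_{n^2}\in X\}.$$ Then there is a $K$-closed set of transvections $Y_2\supseteq Y_1$ with $\ell_{Y_1}(Y_2)\le Cn$ such that $\Gamma(Y_2)$ contains a one-way directed edge.
   Context: A transvection is an element $1+d\otimes\phi\in SL(V)$ acting by $x\mapsto x+\phi(x)d$, with $0\ne d\in V$, $0\ne\phi\in V^*$, $\phi(d)=0$; $s^\lambda=1+\lambda d\otimes\phi$ for $s=1+d\otimes\phi$, and $s^K=\{s^\lambda:\lambda\in K\}$. A set $Y$ of transvections (the identity $1$ being allowed as the trivial transvection) is $K$-closed if $s^K\subseteq Y$ for every $s\in Y$. For sets $A,B\subseteq SL(V)$, $A^k$ is the set of products of $k$ elements of $A$ and $\ell_A(B)=\min\{k: B\subseteq A^k\}$. For a set $Y$ of transvections, $\Gamma(Y)$ is the directed graph with vertex set $Y\setminus\{1\}$ with a directed edge from $1+d_1\otimes\phi_1$ to $1+d_2\otimes\phi_2$ iff $\phi_2(d_1)\neq 0$; an edge $(r,s)$ is one-way directed if $(s,r)$ is not an edge. *)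

(* V = K^n realised as column vectors 'cV[K]_n; SL(V) as n x n
   matrices of determinant 1 acting on column vectors by left multiplication. *)
From mathcomp Require Import all_boot all_order all_algebra.
Set Implicit Arguments. Unset Strict Implicit. Unset Printing Implicit Defensive.
Import GRing.Theory.
Local Open Scope ring_scope.

Section Transvections.
Variables (K : fieldType) (n : nat).
Notation M := ('M[K]_n).

Definition inSL (g : M) : Prop := \det g = 1.

Definition is_transvection (s : M) : Prop :=
  exists (d : 'cV[K]_n) (phi : 'rV[K]_n),
    [/\ d != 0, phi != 0, phi *m d = 0 & s = 1%:M + d *m phi].

Definition is_transvection0 (s : M) : Prop := is_transvection s \/ s = 1%:M.

(* s^lambda = 1 + lambda d (x) phi,  i.e. 1 + lambda (s - 1) *)
Definition tpow (s : M) (lambda : K) : M := 1%:M + lambda *: (s - 1%:M).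

Definition transvection_set (Y : M -> Prop) : Prop :=
  forall s, Y s -> is_transvection0 s.

Definition K_closed (Y : M -> Prop) : Prop :=
  forall s, Y s -> forall lambda : K, Y (tpow s lambda).

Definition prodl (s : seq M) : M := foldr (@mulmx K n n n) 1%:M s.

Definition set_pow (A : M -> Prop) (k : nat) : M -> Prop :=
  fun g => exists s : seq M, [/\ size s = k, (forall a, a \in s -> A a) & g = prodl s].

(* ell_A(B) <= m, where ell_A(B) = min {k : B \subseteq A^k} *)
Definition ell_le (A B : M -> Prop) (m : nat) : Prop :=
  exists k, (k <= m)%N /\ (forall g, B g -> set_pow A k g).

Definition in_gen (X : M -> Prop) (g : M) : Prop :=
  forall H : M -> Prop,
    H 1%:M -> (forall a b, H a -> H b -> H (a *m b)) ->
    (forall a, H a -> H (invmx a)) -> (forall x, X x -> H x) -> H g.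

Definition generates_SL (X : M -> Prop) : Prop :=
  (forall x, X x -> inSL x) /\ (forall g, inSL g -> in_gen X g).

Definition symmetric_set (X : M -> Prop) : Prop := forall x, X x -> X (invmx x).

Definition gamma_edge (r s : M) : Prop :=
  exists (d1 : 'cV[K]_n) (phi1 : 'rV[K]_n) (d2 : 'cV[K]_n) (phi2 : 'rV[K]_n),
    [/\ d1 != 0, phi1 != 0, phi1 *m d1 = 0 & r = 1%:M + d1 *m phi1] /\
    [/\ d2 != 0, phi2 != 0, phi2 *m d2 = 0 & s = 1%:M + d2 *m phi2] /\
    phi2 *m d1 != 0.

Definition has_oneway_edge (Y : M -> Prop) : Prop :=
  exists r s, [/\ Y r, Y s, r <> 1%:M & s <> 1%:M] /\ (gamma_edge r s /\ ~ gamma_edge s r).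

(* Y1 = { x_{n^2} ... x_1 t^lambda x_1^-1 ... x_{n^2}^-1 } ;
   the list xs = [:: x_{n^2}; ...; x_1] *)
Definition Y1_set (X : M -> Prop) (t : M) : M -> Prop :=
  fun g => exists (lambda : K) (xs : seq M),
    [/\ size xs = (n ^ 2)%N, (forall x, x \in xs -> X x) &
        g = prodl xs *m tpow t lambda *m prodl (rev (map (@invmx K n) xs))].

End Transvections.

(* Take Y2 = {y1 y2 y1^-1 : y1, y2 in Y1}: a K-closed set of transvections
   inside Y1^3.  Write t = 1 + d phi and kappa(A) = phi A d ([edge_coef]); for
   invertible G1, G2 there is an edge from t^G1 to t^G2 exactly when
   kappa(G2^-1 G1) <> 0.  If Gamma(Y2) had no one-way edge, this relation would
   be symmetric on the conjugates of t by the matrices t^lambda g, g a word of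
   length n^2 in X, all of which lie in Y2.  Choosing lambda suitably, symmetry
   forces linear functionals such as N |-> kappa(a^-1) kappa(a N) +
   kappa(a) kappa(N a^-1) to vanish on g D g^-1 (D = d phi) for every such
   word g.  The spans of {g D g^-1 : g in X^k} increase with k inside the
   n^2-dimensional space of matrices, so they stabilise at some k <= n^2; from
   then on they are invariant under conjugation by X, hence by SL(V) = <X>.  So
   the functionals vanish on all SL(V)-conjugates of D, which an explicit
   transvection contradicts as soon as n >= 3. *)

From mathcomp Require Import all_boot all_order all_algebra.
From mathcomp Require Import ring.
From Stdlib Require Import Classical ClassicalEpsilon.
Set Implicit Arguments. Unset Strict Implicit. Unset Printing Implicit Defensive.
Import GRing.Theory.
Local Open Scope ring_scope.

Section MatrixConjugation.
Variables (K : fieldType) (n : nat).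
Implicit Types (A B g h s : 'M[K]_n) (xs : seq 'M[K]_n).

Lemma invmx_rinv A B : A *m B = 1%:M -> invmx A = B.
Proof.
by move=> AB; have [uA _] := mulmx1_unit AB; rewrite -[B](mulKmx uA) AB mulmx1.
Qed.

Lemma invmxM A B :
  A \in unitmx -> B \in unitmx -> invmx (A *m B) = invmx B *m invmx A.
Proof.
move=> uA uB; apply: invmx_rinv.
by rewrite -mulmxA (mulmxA B) mulmxV // mul1mx mulmxV.
Qed.

Lemma prodl_nil : prodl [::] = 1%:M :> 'M[K]_n. Proof. by []. Qed.

Lemma prodl_cons x xs : prodl (x :: xs) = x *m prodl xs. Proof. by []. Qed.

Lemma prodl_cat xs1 xs2 : prodl (xs1 ++ xs2) = prodl xs1 *m prodl xs2.
Proof.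
by elim: xs1 => [|x xs1 IH]; rewrite ?prodl_nil ?mul1mx // cat_cons !prodl_cons IH mulmxA.
Qed.

Lemma prodl_nseq1 k : prodl (nseq k 1%:M) = 1%:M :> 'M[K]_n.
Proof. by elim: k => [|k IH] //; rewrite prodl_cons IH mulmx1. Qed.

Lemma prodl_unit xs : {subset xs <= unitmx} -> prodl xs \in unitmx.
Proof.
elim: xs => [|x xs IH] uxs; first exact: unitmx1.
rewrite prodl_cons unitmx_mul uxs ?mem_head // IH // => y y_xs.
by rewrite uxs ?inE ?y_xs ?orbT.
Qed.

Lemma invmx_prodl xs :
  {subset xs <= unitmx} -> invmx (prodl xs) = prodl (rev (map invmx xs)).
Proof.
elim: xs => [|x xs IH] uxs; first exact: invmx1.
have uxs' : {subset xs <= unitmx} by move=> y y_xs; rewrite uxs ?inE ?y_xs ?orbT.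
rewrite prodl_cons (invmxM (uxs _ (mem_head _ _)) (prodl_unit uxs')) IH //=.
by rewrite rev_cons -cats1 prodl_cat prodl_cons prodl_nil mulmx1.
Qed.

Definition mxconj g A := g *m A *m invmx g.

Lemma mxconj1 A : mxconj 1%:M A = A.
Proof. by rewrite /mxconj invmx1 mul1mx mulmx1. Qed.

Lemma mxconjM g h A : g \in unitmx -> h \in unitmx ->
  mxconj (g *m h) A = mxconj g (mxconj h A).
Proof. by move=> ug uh; rewrite /mxconj invmxM // !mulmxA. Qed.

Lemma mxconj0 g : mxconj g 0 = 0.
Proof. by rewrite /mxconj mulmx0 mul0mx. Qed.

Lemma mxconjD g A B : mxconj g (A + B) = mxconj g A + mxconj g B.
Proof. by rewrite /mxconj mulmxDr mulmxDl. Qed.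

Lemma mxconjZ g c A : mxconj g (c *: A) = c *: mxconj g A.
Proof. by rewrite /mxconj -scalemxAr -scalemxAl. Qed.

Lemma mxconj_unit g A : g \in unitmx -> (mxconj g A \in unitmx) = (A \in unitmx).
Proof. by move=> ug; rewrite !unitmx_mul unitmx_inv ug andbT. Qed.

Lemma invmx_mxconj g A : g \in unitmx -> A \in unitmx ->
  invmx (mxconj g A) = mxconj g (invmx A).
Proof.
move=> ug uA; rewrite /mxconj !invmxM ?unitmx_mul ?unitmx_inv ?ug ?uA //.
by rewrite invmxK mulmxA.
Qed.

Lemma tpow_add1 A l : tpow (1%:M + A) l = 1%:M + l *: A.
Proof. by rewrite /tpow (addrC 1%:M A) addrK. Qed.

Lemma tpow0 s : tpow s 0 = 1%:M.
Proof. by rewrite /tpow scale0r addr0. Qed.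

Lemma tpow1 s : tpow s 1 = s.
Proof. by rewrite /tpow scale1r addrC subrK. Qed.

Lemma tpowM s l m : tpow (tpow s l) m = tpow s (m * l).
Proof. by rewrite [tpow s l]/tpow tpow_add1 scalerA. Qed.

Lemma tpow_mxconj g s l : g \in unitmx -> tpow (mxconj g s) l = mxconj g (tpow s l).
Proof.
move=> ug; rewrite /tpow /mxconj mulmxDr mulmxDl mulmx1 mulmxV //.
by rewrite -scalemxAr -scalemxAl mulmxBr mulmxBl mulmx1 mulmxV.
Qed.

End MatrixConjugation.

Section Transvections.
Variables (K : fieldType) (n : nat).
Implicit Types (u c e : 'cV[K]_n) (v r psi : 'rV[K]_n) (G s : 'M[K]_n).

Definition dot r c : K := (r *m c) 0 0.

Lemma dot_eq0 r c : (dot r c == 0) = (r *m c == 0).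
Proof. by rewrite [r *m c]mx11_scalar -scalemx1 scaler_eq0 oner_eq0 orbF. Qed.

Lemma dotDl r1 r2 c : dot (r1 + r2) c = dot r1 c + dot r2 c.
Proof. by rewrite /dot mulmxDl mxE. Qed.

Lemma dotDr r c1 c2 : dot r (c1 + c2) = dot r c1 + dot r c2.
Proof. by rewrite /dot mulmxDr mxE. Qed.

Lemma dotZl k r c : dot (k *: r) c = k * dot r c.
Proof. by rewrite /dot -scalemxAl mxE. Qed.

Lemma dotZr k r c : dot r (k *: c) = k * dot r c.
Proof. by rewrite /dot -scalemxAr mxE. Qed.

Lemma dotNr r c : dot r (- c) = - dot r c.
Proof. by rewrite -scaleN1r dotZr mulN1r. Qed.

Lemma dotA r G c : dot (r *m G) c = dot r (G *m c).
Proof. by rewrite /dot mulmxA. Qed.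

Lemma dot_outer r1 u v c : dot r1 (u *m v *m c) = dot r1 u * dot v c.
Proof. by rewrite /dot -mulmxA mulmxA [LHS]mxE big_ord1. Qed.

Lemma mulmx_outer u r c v : (u *m r) *m (c *m v) = dot r c *: (u *m v).
Proof. by rewrite mulmxA -(mulmxA u) [r *m c]mx11_scalar mul_mx_scalar -scalemxAl. Qed.

Lemma outer_neq0 u v : u != 0 -> v != 0 -> u *m v != 0.
Proof.
case/cV0Pn=> i ui /rV0Pn [j vj]; apply/matrix0Pn; exists i, j.
by rewrite mxE big_ord1 mulf_neq0.
Qed.

Lemma exists_dotl_neq0 r : r != 0 -> exists c, dot r c != 0.
Proof. by case/rV0Pn=> j rj; exists (delta_mx j 0); rewrite /dot -colE mxE. Qed.

Lemma exists_dotr_neq0 c : c != 0 -> exists r, dot r c != 0.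
Proof. by case/cV0Pn=> i ci; exists (delta_mx 0 i); rewrite /dot -rowE mxE. Qed.

Lemma exists_common_kernel r1 r2 :
  (2 < n)%N -> exists2 w, w != 0 & dot r1 w = 0 /\ dot r2 w = 0.
Proof.
move=> n_gt2; set R := col_mx r1 r2.
have : cokermx R != 0.
  by rewrite -mxrank_eq0 mxrank_coker subn_eq0 -ltnNge (leq_ltn_trans (rank_leq_row R)).
case/matrix0Pn=> i [j Cij]; exists (col j (cokermx R)).
  by apply/cV0Pn; exists i; rewrite mxE.
have /eqP : R *m col j (cokermx R) = 0 by rewrite colE mulmxA mulmx_coker mul0mx.
by rewrite mul_col_mx col_mx_eq0 -!dot_eq0 => /andP [/eqP -> /eqP ->].
Qed.

Lemma det_add1_outer u v : \det (1%:M + u *m v) = 1 + dot v u.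
Proof.
pose P := block_mx (1%:M : 'M[K]_1) (- v) u 1%:M.
have lowerP : P = block_mx 1%:M 0 u 1%:M *m block_mx 1%:M (- v) 0 (1%:M + u *m v).
  rewrite mulmx_block !mulmx1 !mul1mx !mulmx0 !mul0mx ?addr0 ?add0r.
  by rewrite mulmxN addrC addrK.
have upperP : P = block_mx 1%:M (- v) 0 1%:M *m block_mx (1%:M + v *m u) 0 u 1%:M.
  rewrite mulmx_block !mulmx1 !mul1mx !mulmx0 !mul0mx ?addr0 ?add0r.
  by rewrite mulNmx addrK.
have := congr1 determinant lowerP; rewrite upperP !det_mulmx.
rewrite !det_lblock !det_ublock !det1 !mul1r !mulr1 => <-.
by rewrite det_mx11 [LHS]mxE mxE.
Qed.

Lemma add1_outer_inv e psi : dot psi e = 0 ->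
  invmx (1%:M + e *m psi) = 1%:M - e *m psi.
Proof.
move=> psi_e; apply: invmx_rinv.
rewrite mulmxDr mulmx1 mulmxDl mul1mx mulmxN mulmx_outer psi_e scale0r.
by rewrite subr0 addrK.
Qed.

Lemma add1_outer_inSL e psi : dot psi e = 0 -> inSL (1%:M + e *m psi).
Proof. by move=> psi_e; rewrite /inSL det_add1_outer psi_e addr0. Qed.

Lemma inSL_unit G : inSL G -> G \in unitmx.
Proof. by rewrite unitmxE => ->; rewrite unitr1. Qed.

Lemma mxconj_add1_outer G u v : G \in unitmx ->
  mxconj G (1%:M + u *m v) = 1%:M + (G *m u) *m (v *m invmx G).
Proof.
move=> uG; rewrite /mxconj mulmxDr mulmxDl mulmx1 mulmxV //.
by rewrite !mulmxA.
Qed.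

Lemma mxconj_transvection_vectors G u v : G \in unitmx ->
  u != 0 -> v != 0 -> v *m u = 0 ->
  [/\ G *m u != 0, v *m invmx G != 0 & (v *m invmx G) *m (G *m u) = 0].
Proof.
move=> uG u0 v0 vu; split.
- by apply: contraNneq u0 => Gu0; rewrite -(mulKmx uG u) Gu0 mulmx0.
- by apply: contraNneq v0 => vG0; rewrite -(mulmxKV uG v) vG0 mul0mx.
- by rewrite mulmxA mulmxKV.
Qed.

Lemma is_transvection_mxconj G s : G \in unitmx ->
  is_transvection s -> is_transvection (mxconj G s).
Proof.
move=> uG [u [v [u0 v0 vu ->]]]; exists (G *m u), (v *m invmx G).
by have [] := mxconj_transvection_vectors uG u0 v0 vu; split; rewrite ?mxconj_add1_outer.
Qed.

Lemma is_transvection0_mxconj G s : G \in unitmx ->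
  is_transvection0 s -> is_transvection0 (mxconj G s).
Proof.
move=> uG [ts|->]; first by left; exact: is_transvection_mxconj.
by right; rewrite /mxconj mulmx1 mulmxV.
Qed.

Lemma is_transvection0_tpow s l : is_transvection0 s -> is_transvection0 (tpow s l).
Proof.
case=> [[u [v [u0 v0 vu ->]]]|->]; last by right; rewrite /tpow subrr scaler0 addr0.
have [->|l0] := eqVneq l 0; first by right; rewrite tpow0.
left; exists (l *: u), v; split => //.
- by rewrite scaler_eq0 negb_or l0.
- by rewrite -scalemxAr vu scaler0.
- by rewrite tpow_add1 scalemxAl.
Qed.

Lemma is_transvection_neq1 s : is_transvection s -> s <> 1%:M.
Proof.
case=> [u [v [u0 v0 _ ->]]] /(canRL (addKr 1%:M)); rewrite addNr.
by move/eqP; apply/negP: (outer_neq0 u0 v0).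
Qed.

Lemma gamma_edge_outerP u1 v1 u2 v2 :
  u1 != 0 -> v1 != 0 -> v1 *m u1 = 0 -> u2 != 0 -> v2 != 0 -> v2 *m u2 = 0 ->
  gamma_edge (1%:M + u1 *m v1) (1%:M + u2 *m v2) <-> v2 *m u1 != 0.
Proof.
move=> u1_0 v1_0 v1u1 u2_0 v2_0 v2u2; split; last first.
  by move=> v2u1; exists u1, v1, u2, v2.
case=> [u1' [v1' [u2' [v2' [[u1'0 v1'0 _ /addrI E1] [[u2'0 v2'0 _ /addrI E2] v2u1']]]]]].
have : (u2 *m v2) *m (u1 *m v1) != 0.
  rewrite E1 E2 mulmx_outer scaler_eq0 negb_or outer_neq0 // andbT.
  by rewrite dot_eq0.
by rewrite mulmx_outer scaler_eq0 negb_or dot_eq0 => /andP [].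
Qed.

End Transvections.

Section SpanOfPredicate.
Variables (K : fieldType) (m : nat).
Implicit Types (P : 'rV[K]_m -> Prop) (l : seq 'rV[K]_m).

Definition span_seq l : 'M[K]_m := foldr (fun v S => (v + S)%MS) 0 l.

Lemma span_seq_sub l p (A : 'M[K]_(p, m)) :
  {in l, forall v, v <= A}%MS -> (span_seq l <= A)%MS.
Proof.
elim: l => [|w l IH] lA /=; first exact: sub0mx.
by rewrite addsmx_sub lA ?mem_head //= IH // => v v_l; rewrite lA // inE v_l orbT.
Qed.

Lemma span_seq_ind (Q : 'rV[K]_m -> Prop) l :
  Q 0 -> (forall v w, Q v -> Q w -> Q (v + w)) -> (forall c v, Q v -> Q (c *: v)) ->
  {in l, forall v, Q v} -> forall v, (v <= span_seq l)%MS -> Q v.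
Proof.
move=> Q0 QD QZ; elim: l => [|w l IH] Ql v /=; first by rewrite submx0 => /eqP ->.
case/sub_addsmxP=> [[a b] /= ->]; apply: QD.
  by rewrite [a]mx11_scalar mul_scalar_mx; apply/QZ/Ql/mem_head.
by apply: IH (submxMl _ _) => x x_l; apply: Ql; rewrite inE x_l orbT.
Qed.

Lemma span_seq_grow P l :
  (forall v, P v -> (v <= span_seq l)%MS) \/
  exists2 v, P v & (\rank (span_seq l) < \rank (span_seq (v :: l)))%N.
Proof.
have [[v Pv v_notin]|spans] := classic (exists2 v, P v & ~~ (v <= span_seq l)%MS).
  right; exists v => //; apply: rank_ltmx; rewrite ltmxE addsmxSr /=.
  by apply: contra v_notin; apply: submx_trans (addsmxSl _ _).
by left=> v Pv; apply/negPn/negP => v_notin; apply: spans; exists v.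
Qed.

Lemma exists_spanning_seq P :
  exists l, {in l, forall v, P v} /\ forall v, P v -> (v <= span_seq l)%MS.
Proof.
suff: forall k l, (m - \rank (span_seq l) <= k)%N -> {in l, forall v, P v} ->
    exists l, {in l, forall v, P v} /\ forall v, P v -> (v <= span_seq l)%MS.
  by move/(_ m [::]); apply; rewrite ?leq_subr.
elim=> [|k IHk] l corank Pl.
  have [spans|[v _ rank_lt]] := span_seq_grow P l; first by exists l.
  move: (leq_trans rank_lt (rank_leq_col _)).
  by rewrite ltnNge -subn_eq0 -leqn0 corank.
have [spans|[v Pv rank_lt]] := span_seq_grow P l; first by exists l.
apply: (IHk (v :: l)); last by move=> w; rewrite inE => /predU1P [->|/Pl].
by rewrite -ltnS (leq_trans _ corank) // ltn_sub2l // (leq_trans rank_lt) ?rank_leq_col.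
Qed.

Definition spanning_seq P : seq 'rV[K]_m :=
  proj1_sig (constructive_indefinite_description _ (exists_spanning_seq P)).

Definition pspan P : 'M[K]_m := span_seq (spanning_seq P).

Lemma spanning_seqP P :
  {in spanning_seq P, forall v, P v} /\ forall v, P v -> (v <= pspan P)%MS.
Proof. by rewrite /pspan /spanning_seq; case: constructive_indefinite_description. Qed.

Lemma pspan_sup P v : P v -> (v <= pspan P)%MS.
Proof. exact: (proj2 (spanning_seqP P)). Qed.

Lemma pspan_ind P (Q : 'rV[K]_m -> Prop) :
  Q 0 -> (forall v w, Q v -> Q w -> Q (v + w)) -> (forall c v, Q v -> Q (c *: v)) ->
  (forall v, P v -> Q v) -> forall v, (v <= pspan P)%MS -> Q v.
Proof.
move=> Q0 QD QZ PQ; have [PS _] := spanning_seqP P.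
by apply: span_seq_ind => // v /PS /PQ.
Qed.

Lemma pspan_sub P p (A : 'M[K]_(p, m)) :
  (forall v, P v -> (v <= A)%MS) -> (pspan P <= A)%MS.
Proof.
move=> PA; have [PS _] := spanning_seqP P.
by apply: span_seq_sub => v /PS /PA.
Qed.

End SpanOfPredicate.

Section Words.
Variables (K : fieldType) (n : nat) (X : 'M[K]_n -> Prop).
Hypotheses (genX : generates_SL X) (symX : symmetric_set X) (X1 : X 1%:M).

Lemma gen_unit x : X x -> x \in unitmx.
Proof. by move/(proj1 genX); apply: inSL_unit. Qed.

Lemma set_pow_unit k g : set_pow X k g -> g \in unitmx.
Proof. by case=> xs [_ Xxs ->]; apply: prodl_unit => x /Xxs /gen_unit. Qed.

Lemma set_pow1 k : set_pow X k 1%:M.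
Proof.
exists (nseq k 1%:M); rewrite size_nseq prodl_nseq1; split=> // x.
by rewrite mem_nseq => /andP [_ /eqP ->].
Qed.

Lemma set_pow_leq k1 k2 g : (k1 <= k2)%N -> set_pow X k1 g -> set_pow X k2 g.
Proof.
move=> le_k [xs [size_xs Xxs ->]]; exists (nseq (k2 - k1) 1%:M ++ xs); split.
- by rewrite size_cat size_nseq size_xs subnK.
- by move=> x; rewrite mem_cat mem_nseq => /orP [/andP [_ /eqP ->]|/Xxs].
- by rewrite prodl_cat prodl_nseq1 mul1mx.
Qed.

Lemma set_pow_cons k x g : X x -> set_pow X k g -> set_pow X k.+1 (x *m g).
Proof.
move=> Xx [xs [size_xs Xxs ->]]; exists (x :: xs); split=> /=; rewrite ?size_xs //.
by move=> y; rewrite inE => /predU1P [->|/Xxs].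
Qed.

Lemma set_pow_invmx k g : set_pow X k g -> set_pow X k (invmx g).
Proof.
case=> xs [size_xs Xxs ->]; exists (rev (map invmx xs)); split.
- by rewrite size_rev size_map.
- by move=> y; rewrite mem_rev => /mapP [x /Xxs Xx ->]; apply: symX.
- by rewrite invmx_prodl // => x /Xxs /gen_unit.
Qed.

Lemma Y1_setP t y :
  Y1_set X t y <-> exists2 g, set_pow X (n ^ 2) g & exists l, y = mxconj g (tpow t l).
Proof.
have conjE xs : (forall x, x \in xs -> X x) -> forall A,
    prodl xs *m A *m prodl (rev (map invmx xs)) = mxconj (prodl xs) A.
  by move=> Xxs A; rewrite /mxconj invmx_prodl // => x /Xxs /gen_unit.
split=> [[l [xs [size_xs Xxs ->]]]|[g [xs [size_xs Xxs ->]] [l ->]]].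
  by exists (prodl xs); [exists xs | exists l; rewrite conjE].
by exists l, xs; split=> //; rewrite conjE.
Qed.

Section ConjugateSpan.
Variable A : 'M[K]_n.

Definition conj_span k :=
  pspan (fun v => exists2 b, set_pow X k b & v = mxvec (mxconj b A)).

Lemma conj_span_sup k b : set_pow X k b -> (mxvec (mxconj b A) <= conj_span k)%MS.
Proof. by move=> Xb; apply: pspan_sup; exists b. Qed.

Lemma conj_span_leq k1 k2 : (k1 <= k2)%N -> (conj_span k1 <= conj_span k2)%MS.
Proof.
by move=> le_k; apply: pspan_sub => _ [b Xb ->]; apply/conj_span_sup/(set_pow_leq le_k).
Qed.

Lemma conj_span_mxconj k x B : X x ->
  (mxvec B <= conj_span k)%MS -> (mxvec (mxconj x B) <= conj_span k.+1)%MS.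
Proof.
move=> Xx; rewrite -[B in mxconj x B]mxvecK; move: (mxvec B); apply: pspan_ind.
- by rewrite linear0 mxconj0 linear0 sub0mx.
- by move=> v w Sv Sw; rewrite linearD mxconjD linearD addmx_sub.
- by move=> c v Sv; rewrite linearZ mxconjZ linearZ scalemx_sub.
- move=> _ [b Xb ->]; rewrite mxvecK -mxconjM ?(gen_unit Xx) ?(set_pow_unit Xb) //.
  by apply/conj_span_sup/set_pow_cons.
Qed.

Lemma conj_span_stable :
  exists2 k, (k <= n ^ 2)%N & (conj_span k.+1 <= conj_span k)%MS.
Proof.
apply: NNPP => unstable.
have rank_ge k : (k <= (n ^ 2).+1)%N -> (k <= \rank (conj_span k))%N.
  elim: k => // k IHk lt_k; apply: leq_ltn_trans (IHk (ltnW lt_k)) _.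
  apply: rank_ltmx; rewrite ltmxE conj_span_leq //=.
  by apply/negP => grown; apply: unstable; exists k.
by have := leq_trans (rank_ge _ (leqnn _)) (rank_leq_col _); rewrite mulnn ltnn.
Qed.

Lemma conj_span_SL g : inSL g -> (mxvec (mxconj g A) <= conj_span (n ^ 2))%MS.
Proof.
move=> SLg; have [k le_k stable] := conj_span_stable.
pose stabilizes h := forall B,
  (mxvec B <= conj_span k)%MS -> (mxvec (mxconj h B) <= conj_span k)%MS.
have stabX x : X x -> stabilizes x.
  by move=> Xx B /(conj_span_mxconj Xx) /submx_trans; apply.
have [_ stab_g _] : [/\ g \in unitmx, stabilizes g & stabilizes (invmx g)].
  apply: (proj2 genX g SLg (fun h =>
    [/\ h \in unitmx, stabilizes h & stabilizes (invmx h)])).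
  - by rewrite invmx1; split=> [|B|B]; rewrite ?unitmx1 ?mxconj1.
  - move=> a b [ua sa sa'] [ub sb sb']; split; first by rewrite unitmx_mul ua.
      by move=> B /sb /sa; rewrite mxconjM.
    by rewrite invmxM // => B /sa' /sb'; rewrite mxconjM ?unitmx_inv.
  - by move=> h [uh sh sh']; rewrite unitmx_inv invmxK.
  - by move=> x Xx; split; [exact: gen_unit | exact: stabX | exact/stabX/symX].
apply: submx_trans (conj_span_leq le_k); apply: stab_g.
by rewrite -{1}[A]mxconj1; apply/conj_span_sup/set_pow1.
Qed.

Lemma functional_vanish_SL (L : 'M[K]_n -> K) :
  (forall B C, L (B + C) = L B + L C) -> (forall c B, L (c *: B) = c * L B) ->
  (forall b, set_pow X (n ^ 2) b -> L (mxconj b A) = 0) ->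
  forall g, inSL g -> L (mxconj g A) = 0.
Proof.
move=> LD LZ Lb g SLg; rewrite -(mxvecK (mxconj g A)).
apply: (pspan_ind (Q := fun v => L (vec_mx v) = 0) _ _ _ _ (conj_span_SL SLg)).
- by rewrite linear0 -(scale0r 0) LZ mul0r.
- by move=> v w Lv Lw; rewrite linearD LD Lv Lw addr0.
- by move=> c v Lv; rewrite linearZ LZ Lv mulr0.
- by move=> _ [b Xb ->]; rewrite mxvecK Lb.
Qed.

End ConjugateSpan.

End Words.

Section OneWayEdge.
Variables (K : fieldType) (n : nat) (X : 'M[K]_n -> Prop).
Hypotheses (genX : generates_SL X) (symX : symmetric_set X) (X1 : X 1%:M).
Variables (d : 'cV[K]_n) (phi : 'rV[K]_n).
Hypotheses (d_neq0 : d != 0) (phi_neq0 : phi != 0) (phi_d : phi *m d = 0).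

Local Notation t := (1%:M + d *m phi).
Local Notation F := (set_pow X (n ^ 2)).
Local Notation Y1 := (Y1_set X t).
Let D := d *m phi.

Lemma t_transvection : is_transvection t.
Proof. by exists d, phi. Qed.

Lemma dot_phi_d : dot phi d = 0.
Proof. by rewrite /dot phi_d mxE. Qed.

Lemma tpow_t l : tpow t l = 1%:M + (l *: d) *m phi.
Proof. by rewrite tpow_add1 scalemxAl. Qed.

Lemma tpow_t_unit l : tpow t l \in unitmx.
Proof.
by rewrite tpow_t; apply/inSL_unit/add1_outer_inSL; rewrite dotZr dot_phi_d mulr0.
Qed.

Lemma tpow_t_invmx l : invmx (tpow t l) = tpow t (- l).
Proof.
by rewrite !tpow_t add1_outer_inv ?dotZr ?dot_phi_d ?mulr0 // scaleNr mulNmx.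
Qed.

Lemma Y1_mxconj g l : F g -> Y1 (mxconj g (tpow t l)).
Proof. by move=> Fg; apply/(Y1_setP genX); exists g => //; exists l. Qed.

Lemma Y1_unit y : Y1 y -> y \in unitmx.
Proof.
case/(Y1_setP genX)=> g /(set_pow_unit genX) ug [l ->].
by rewrite mxconj_unit ?tpow_t_unit.
Qed.

Lemma Y1_invmx y : Y1 y -> Y1 (invmx y).
Proof.
case/(Y1_setP genX)=> g Fg [l ->].
rewrite invmx_mxconj ?(set_pow_unit genX Fg) ?tpow_t_unit // tpow_t_invmx.
exact: Y1_mxconj.
Qed.

Lemma Y1_tpow y l : Y1 y -> Y1 (tpow y l).
Proof.
case/(Y1_setP genX)=> g Fg [m ->].
by rewrite tpow_mxconj ?(set_pow_unit genX Fg) // tpowM; apply: Y1_mxconj.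
Qed.

Definition Y2 h := exists y1 y2, [/\ Y1 y1, Y1 y2 & h = mxconj y1 y2].

Lemma Y1_sub_Y2 y : Y1 y -> Y2 y.
Proof.
move=> Y1y; exists 1%:M, y; rewrite mxconj1; split=> //.
by have := Y1_mxconj 0 (set_pow1 X1 _); rewrite tpow0 mxconj1.
Qed.

Lemma Y2_transvection_set : transvection_set Y2.
Proof.
move=> _ [y1 [y2 [Y1y1 /(Y1_setP genX) [g Fg [l ->]] ->]]].
apply: (is_transvection0_mxconj (Y1_unit Y1y1)).
apply: (is_transvection0_mxconj (set_pow_unit genX Fg)).
by apply: is_transvection0_tpow; left; apply: t_transvection.
Qed.

Lemma Y2_K_closed : K_closed Y2.
Proof.
move=> _ [y1 [y2 [Y1y1 Y1y2 ->]]] l; exists y1, (tpow y2 l).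
by rewrite tpow_mxconj ?Y1_unit //; split=> //; apply: Y1_tpow.
Qed.

Lemma Y2_sub_set_pow3 h : Y2 h -> set_pow Y1 3 h.
Proof.
case=> y1 [y2 [Y1y1 Y1y2 ->]]; exists [:: y1; y2; invmx y1]; split=> //.
  by move=> y; rewrite !inE => /or3P [] /eqP ->; last exact: Y1_invmx.
by rewrite /mxconj !prodl_cons prodl_nil mulmx1 mulmxA.
Qed.

Lemma Y2_mxconj_t l g : F g -> Y2 (mxconj (tpow t l *m g) t).
Proof.
move=> Fg; exists (tpow t l), (mxconj g t); split.
- by have := Y1_mxconj l (set_pow1 X1 _); rewrite mxconj1.
- by have := Y1_mxconj 1 Fg; rewrite tpow1.
- by rewrite mxconjM ?tpow_t_unit ?(set_pow_unit genX Fg).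
Qed.

Lemma Y2_mxconj_word g : F g -> Y2 (mxconj g t).
Proof. by move=> Fg; have := Y2_mxconj_t 0 Fg; rewrite tpow0 mul1mx. Qed.

Definition edge_coef (A : 'M[K]_n) := dot phi (A *m d).

Lemma edge_coef1 : edge_coef 1%:M = 0.
Proof. by rewrite /edge_coef mul1mx dot_phi_d. Qed.

Lemma edge_coefD A B : edge_coef (A + B) = edge_coef A + edge_coef B.
Proof. by rewrite /edge_coef mulmxDl dotDr. Qed.

Lemma edge_coefZ c A : edge_coef (c *: A) = c * edge_coef A.
Proof. by rewrite /edge_coef -scalemxAl dotZr. Qed.

Lemma edge_coef_outer A (u : 'cV[K]_n) (v : 'rV[K]_n) B :
  edge_coef (A *m (u *m v) *m B) = dot phi (A *m u) * dot v (B *m d).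
Proof. by rewrite /edge_coef !mulmxA -(mulmxA _ B d) dot_outer. Qed.

Lemma edge_coef_split A B : edge_coef (A *m D *m B) = edge_coef A * edge_coef B.
Proof. exact: edge_coef_outer. Qed.

Lemma edge_coef_add1_outer A (u : 'cV[K]_n) (v : 'rV[K]_n) B :
  edge_coef (A *m (1%:M + u *m v) *m B) =
  edge_coef (A *m B) + dot phi (A *m u) * dot v (B *m d).
Proof. by rewrite mulmxDr mulmx1 mulmxDl edge_coefD edge_coef_outer. Qed.

Lemma edge_coef_add1_outer1 (u : 'cV[K]_n) (v : 'rV[K]_n) :
  edge_coef (1%:M + u *m v) = dot phi u * dot v d.
Proof.
have := edge_coef_add1_outer 1%:M u v 1%:M.
by rewrite !mul1mx !mulmx1 edge_coef1 add0r.
Qed.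

Lemma edge_coef_tpow A l B :
  edge_coef (A *m tpow t l *m B) = edge_coef (A *m B) + l * edge_coef A * edge_coef B.
Proof. by rewrite tpow_t edge_coef_add1_outer -scalemxAr dotZr. Qed.

Lemma gamma_edge_mxconj G1 G2 : G1 \in unitmx -> G2 \in unitmx ->
  gamma_edge (mxconj G1 t) (mxconj G2 t) <-> edge_coef (invmx G2 *m G1) != 0.
Proof.
move=> u1 u2; have [n1 m1 o1] := mxconj_transvection_vectors u1 d_neq0 phi_neq0 phi_d.
have [n2 m2 o2] := mxconj_transvection_vectors u2 d_neq0 phi_neq0 phi_d.
rewrite !mxconj_add1_outer //; apply: iff_trans (gamma_edge_outerP n1 m1 o1 n2 m2 o2) _.
by rewrite -dot_eq0 dotA mulmxA.
Qed.

Section NoOneWayEdge.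
Hypothesis no_oneway : ~ has_oneway_edge Y2.

Lemma edge_coef_sym G1 G2 : G1 \in unitmx -> G2 \in unitmx ->
  Y2 (mxconj G1 t) -> Y2 (mxconj G2 t) ->
  (edge_coef (invmx G2 *m G1) == 0) = (edge_coef (invmx G1 *m G2) == 0).
Proof.
have oneway Ga Gb : Ga \in unitmx -> Gb \in unitmx ->
    Y2 (mxconj Ga t) -> Y2 (mxconj Gb t) ->
    edge_coef (invmx Gb *m Ga) != 0 -> edge_coef (invmx Ga *m Gb) != 0.
  move=> ua ub Ya Yb ab; apply/negP => /eqP ba; apply: no_oneway.
  exists (mxconj Ga t), (mxconj Gb t); split.
    by split=> //; apply/is_transvection_neq1/is_transvection_mxconj/t_transvection.
  split; first exact/gamma_edge_mxconj.
  by move/(gamma_edge_mxconj ub ua); rewrite ba eqxx.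
by move=> u1 u2 Y2_1 Y2_2; apply/idP/idP; apply: contraTT; apply: oneway.
Qed.

Lemma edge_coef_invmx g : F g -> (edge_coef (invmx g) == 0) = (edge_coef g == 0).
Proof.
move=> Fg; have := edge_coef_sym (unitmx1 _ _) (set_pow_unit genX Fg).
rewrite invmx1 mul1mx mulmx1; apply; apply: Y2_mxconj_word => //.
exact: set_pow1.
Qed.

Lemma edge_coef_relation a b : F a -> F b -> edge_coef a != 0 ->
  edge_coef (invmx a) * edge_coef (a *m b) * edge_coef (invmx b) +
  edge_coef a * edge_coef b * edge_coef (invmx b *m invmx a) = 0.
Proof.
move=> Fa Fb fa_neq0.
have [fb0|fb_neq0] := eqVneq (edge_coef b) 0.
  move/eqP: (fb0); rewrite -edge_coef_invmx // => /eqP fb'0.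
  by rewrite fb0 fb'0 !(mulr0, mul0r) addr0.
have p_neq0 : edge_coef (invmx a) != 0 by rewrite edge_coef_invmx.
have q_neq0 : edge_coef (invmx b) != 0 by rewrite edge_coef_invmx.
have [ua ub] := (set_pow_unit genX Fa, set_pow_unit genX Fb).
(* [l] kills the edge from t^(t^l a^-1) to t^b, so symmetry kills the reverse one. *)
pose l := - edge_coef (invmx b *m invmx a) /
            (edge_coef (invmx b) * edge_coef (invmx a)).
have uG : tpow t l *m invmx a \in unitmx by rewrite unitmx_mul tpow_t_unit unitmx_inv.
have YG := Y2_mxconj_t l (set_pow_invmx genX symX Fa).
have := edge_coef_sym uG ub YG (Y2_mxconj_word Fb).
rewrite mulmxA edge_coef_tpow [X in X == 0](_ : _ = 0); last first.
  by rewrite /l; field; apply/andP.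
rewrite eqxx invmxM ?tpow_t_unit ?unitmx_inv // invmxK tpow_t_invmx edge_coef_tpow.
move/esym/eqP; rewrite !mulNr => /subr0_eq ->.
by rewrite /l; field; apply/andP.
Qed.

Lemma exists_edge_coef_neq0 : exists2 a, F a & edge_coef a != 0.
Proof.
apply: NNPP => all0.
have vanish g : inSL g -> edge_coef (mxconj g D) = 0.
  move=> SLg; apply: (functional_vanish_SL genX symX X1 edge_coefD edge_coefZ _ SLg).
  move=> b Fb.
  have fb0 : edge_coef b = 0.
    by apply/eqP/negPn/negP => fb; apply: all0; exists b.
  by rewrite /mxconj edge_coef_split fb0 mul0r.
have [e phi_e] := exists_dotl_neq0 phi_neq0.
have [theta theta_d] := exists_dotr_neq0 d_neq0.
pose psi := dot phi e *: theta + (- dot theta e) *: phi.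
have psi_e : dot psi e = 0 by rewrite dotDl !dotZl mulrC mulNr addrN.
have psi_d : dot psi d = dot phi e * dot theta d.
  by rewrite dotDl !dotZl dot_phi_d mulr0 addr0.
have := vanish _ (add1_outer_inSL psi_e); apply/eqP.
rewrite /mxconj add1_outer_inv // edge_coef_split -mulNmx !edge_coef_add1_outer1.
by rewrite dotNr psi_d mulNr mulrN oppr_eq0 !mulf_neq0.
Qed.

Section TwistedCoefficient.
Variable a : 'M[K]_n.
Hypotheses (Fa : F a) (fa_neq0 : edge_coef a != 0).

Definition twist_coef N :=
  edge_coef (invmx a) * edge_coef (a *m N) + edge_coef a * edge_coef (N *m invmx a).

Lemma twist_coef_mxconj g : twist_coef (mxconj g D) =
  edge_coef (invmx a) * edge_coef (a *m g) * edge_coef (invmx g) +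
  edge_coef a * edge_coef g * edge_coef (invmx g *m invmx a).
Proof.
rewrite /twist_coef /mxconj (mulmxA a) (mulmxA a) edge_coef_split.
by rewrite -(mulmxA (g *m D)) edge_coef_split !mulrA.
Qed.

Lemma twist_coef_vanish g : inSL g -> twist_coef (mxconj g D) = 0.
Proof.
move=> SLg; apply: (functional_vanish_SL genX symX X1 _ _ _ SLg) => [N1 N2|c N|b Fb].
- by rewrite /twist_coef mulmxDr mulmxDl !edge_coefD; ring.
- by rewrite /twist_coef -scalemxAr -scalemxAl !edge_coefZ; ring.
- by rewrite twist_coef_mxconj edge_coef_relation.
Qed.

Lemma twist_coef_witness :
  (2 < n)%N -> exists2 g, inSL g & twist_coef (mxconj g D) != 0.
Proof.
move=> n_gt2; have ua := set_pow_unit genX Fa.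
set p := edge_coef (invmx a); set fa := edge_coef a.
have p_neq0 : p != 0 by rewrite /p edge_coef_invmx.
set alpha := phi *m a; set beta := invmx a *m d.
have alpha_d : dot alpha d = fa by rewrite dotA.
have alpha_beta : dot alpha beta = 0 by rewrite dotA mulmxA mulmxV // mul1mx dot_phi_d.
have [w w_neq0 [phi_w alpha_w]] := exists_common_kernel phi alpha n_gt2.
have [theta theta_w] := exists_dotr_neq0 w_neq0.
pose e := beta + w.
have phi_e : dot phi e = p by rewrite dotDr phi_w addr0.
have alpha_e : dot alpha e = 0 by rewrite dotDr alpha_beta alpha_w addr0.
pose psi := (- dot theta e / p) *: phi + ((1 - dot theta d) / fa) *: alpha + theta.
have psi_e : dot psi e = 0.
  by rewrite !dotDl !dotZl phi_e alpha_e; field; apply/andP.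
have psi_d : dot psi d = 1.
  by rewrite !dotDl !dotZl dot_phi_d alpha_d; field; apply/andP.
have psi_beta : dot psi beta = - dot theta w.
  have phi_beta : dot phi beta = p by [].
  by rewrite !dotDl !dotZl phi_beta alpha_beta /e dotDr; field; apply/andP.
(* For g = 1 + e psi these conditions make twist_coef (g D g^-1) equal to
   kappa(a) kappa(a^-1)^2 (theta w). *)
exists (1%:M + e *m psi); first exact: add1_outer_inSL.
have coef_ag : edge_coef (a *m (1%:M + e *m psi)) = fa.
  rewrite -[a *m _]mulmx1 edge_coef_add1_outer !mulmx1 mul1mx.
  by rewrite -dotA alpha_e mul0r addr0.
have coef_ga : edge_coef ((1%:M - e *m psi) *m invmx a) = p + p * dot theta w.
  rewrite -[_ *m invmx a]mul1mx mulmxA -mulNmx edge_coef_add1_outer !mul1mx.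
  by rewrite dotNr phi_e psi_beta mulrNN.
rewrite twist_coef_mxconj add1_outer_inv // coef_ag coef_ga -mulNmx.
rewrite !edge_coef_add1_outer1 dotNr phi_e psi_d -/p -/fa.
rewrite [X in X != 0](_ : _ = fa * (p * p) * dot theta w); last by ring.
by rewrite !mulf_neq0.
Qed.

End TwistedCoefficient.

Lemma dim_le2 : (n <= 2)%N.
Proof.
rewrite leqNgt; apply/negP => n_gt2.
have [a Fa fa_neq0] := exists_edge_coef_neq0.
have [g SLg] := twist_coef_witness Fa fa_neq0 n_gt2.
by rewrite twist_coef_vanish ?eqxx.
Qed.

End NoOneWayEdge.

End OneWayEdge.

Theorem corollary4p7 :
  exists C : nat,
  forall (K : fieldType) (n : nat), (3 <= n)%N ->
  forall (X : 'M[K]_n -> Prop) (t : 'M[K]_n),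
    generates_SL X -> symmetric_set X -> X 1%:M ->
    is_transvection t -> (forall lambda : K, X (tpow t lambda)) ->
    exists Y2 : 'M[K]_n -> Prop,
      [/\ transvection_set Y2, K_closed Y2,
          (forall g, Y1_set X t g -> Y2 g),
          ell_le (Y1_set X t) Y2 (C * n)
        & has_oneway_edge Y2].
Proof.
exists 1%N => K n n_ge3 X _ genX symX X1 [d [phi [d_neq0 phi_neq0 phi_d ->]]] _.
exists (Y2 X d phi); split.
- exact: Y2_transvection_set.
- exact: Y2_K_closed.
- exact: Y1_sub_Y2.
- by exists 3%N; split=> [|h]; [rewrite mul1n | apply: Y2_sub_set_pow3].
- apply: NNPP => no_oneway.
  have := dim_le2 genX symX X1 d_neq0 phi_neq0 phi_d no_oneway.
  by rewrite leqNgt n_ge3.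
Qed.
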